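(* Let $R$ be a commutative ring which is free as an abelian group with $\mathbb{Z}$-basis $V$, let $n\ge2$ and $p$ a prime, and write $\Gamma_m=\Gamma(SL_n(R),p^m)$. Suppose $|V|<\infty$ or $s=1$. Then for all $r\ge s\ge1$, $$\Gamma_r/\Gamma_{r+s}\cong\bigoplus_{n^2-1}\mathbb{Z}/p^s\mathbb{Z}[V].$$
   Context: $\Gamma(SL_n(R),p^m)=\ker\big(SL_n(R)\to SL_n(R\otimes_{\mathbb{Z}}\mathbb{Z}/p^m)\big)$. $\mathbb{Z}/p^s\mathbb{Z}[V]$ denotes the free $\mathbb{Z}/p^s$-module with basis $V$ (equivalently the additive group of $R/p^sR$); the right-hand side is a direct sum of $n^2-1$ copies of it. *)

From mathcomp Require Import all_boot all_order all_algebra.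
Set Implicit Arguments. Unset Strict Implicit. Unset Printing Implicit Defensive.
Import GRing.Theory.
Local Open Scope ring_scope.

Definition is_Zbasis (R : comPzRingType) (I : eqType) (b : I -> R) : Prop :=
  (forall x : R, exists (e : seq I) (c : I -> int),
      x = \sum_(i <- e) (b i) *~ (c i)) /\
  (forall (e : seq I) (c : I -> int), uniq e ->
      \sum_(i <- e) (b i) *~ (c i) = 0 -> forall i, i \in e -> c i = 0).

Definition in_pmR (R : comPzRingType) (p m : nat) (x : R) : Prop :=
  exists y : R, x = (p ^ m)%N%:R * y.

(* Gamma(SL_n(R), p^m) = ker(SL_n(R) -> SL_n(R/p^m R)) : matrices of
   determinant 1 that are congruent to the identity modulo p^m R. *)
Definition in_Gamma (R : comPzRingType) (n p m : nat) (A : 'M[R]_n) : Prop :=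
  \det A = 1 /\ forall i j, in_pmR p m ((A - 1%:M) i j).

(* Finitely supported elements of the product over 'I_k x I of Z/p^s:
   these form the direct sum of k copies of (Z/p^s Z)[I]. *)
Definition fin_supp (I : eqType) (k q : nat) (f : 'I_k -> I -> 'Z_q) : Prop :=
  exists e : seq I, forall j v, f j v != 0 -> v \in e.

(* For A in Gamma_r write A = 1 + p^r dev A; dev A is well defined because R,
   being free over Z, is torsion-free. As 2r >= r + s,
   dev (AB) = dev A + dev B mod p^s, so A |-> dev A mod p^s is a homomorphism
   into M_n(R/p^s R) with kernel Gamma_(r+s). Its image is the trace-zero
   matrices: det (1 + p^r X) = 1 + p^r tr X mod p^(r+s), while the
   transvections 1 + p^r x e_ik and their conjugates realize x e_ik and
   x (e_ii - e_ll), which span all trace-zero matrices. A trace-zero matrix is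
   determined by its n^2 - 1 entries off one diagonal position, and the
   Z-basis V identifies R/p^s R with (Z/p^s)[V]. *)

From Stdlib Require Import ClassicalEpsilon.
From mathcomp Require Import all_boot all_order all_algebra ring zify.
Set Implicit Arguments.
Unset Strict Implicit.
Unset Printing Implicit Defensive.
Import GRing.Theory Num.Theory.
Local Open Scope ring_scope.

Lemma intr_Zp_eq0 q (z : int) : (1 < q)%N -> ((z%:~R : 'Z_q) == 0) = (q %| z)%Z.
Proof.
move=> q_gt1; have natr_eq0 k : ((k%:R : 'Z_q) == 0) = (q %| k)%N.
  by rewrite -val_eqE /= val_Zp_nat.
by case: z => k; rewrite dvdzE /= ?NegzE ?mulrNz ?oppr_eq0 -pmulrn natr_eq0.
Qed.

Section ElementaryMatrices.
Variables (R : comPzRingType) (n : nat).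

Lemma mulmx_sub1 (A B : 'M[R]_n) :
  A *m B - 1%:M = (A - 1%:M) + (B - 1%:M) + (A - 1%:M) *m (B - 1%:M).
Proof.
rewrite mulmxBl !mulmxBr !mul1mx mulmx1.
by apply/matrixP => u w; rewrite !mxE; ring.
Qed.

Lemma det_transvection (c : R) (i k : 'I_n) : i != k ->
  \det (1%:M + c *: delta_mx i k) = 1.
Proof.
wlog ki : i k c / (k < i)%N => [hw ik|_].
  case: (ltngtP k i) => [ki|ik'|e]; first exact: hw.
  - rewrite -det_tr linearD /= linearZ /= trmx_delta tr_scalar_mx.
    by apply: hw; rewrite // eq_sym.
  - by move: ik; rewrite (val_inj e) eqxx.
have ik : (i == k) = false by rewrite -val_eqE /= gtn_eqF.
rewrite det_trig.
  rewrite big1 // => u _; rewrite !mxE eqxx.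
  by case: (u =P i) => [->|] /=; rewrite ?ik mulr0 addr0.
apply/is_trig_mxP => u w uw; rewrite !mxE -[u == w]val_eqE /= (ltn_eqF uw) /=.
case: eqP => [ui|]; case: eqP => [wk|] //=; rewrite ?mulr0 ?addr0 //.
by move: uw; rewrite ui wk => /(ltn_trans ki); rewrite ltnn.
Qed.

Lemma det_dilation (c : R) (l : 'I_n) :
  \det (1%:M + c *: delta_mx l l) = 1 + c.
Proof.
rewrite det_trig; last first.
  apply/is_trig_mxP => u w uw.
  rewrite !mxE -[u == w]val_eqE /= (ltn_eqF uw) /=.
  case: eqP => [ul|]; case: eqP => [wl|] //=; rewrite ?mulr0 ?addr0 //.
  by move: uw; rewrite ul wl ltnn.
rewrite (bigD1 l) //= big1 ?mulr1 => [|u ul]; rewrite !mxE !eqxx ?mulr1 //.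
by rewrite (negbTE ul) mulr0 addr0.
Qed.

Lemma transvection_conj (a : R) (i l : 'I_n) : i != l ->
  (1%:M - delta_mx l i) *m (1%:M + a *: delta_mx i l) *m (1%:M + delta_mx l i) =
  1%:M + a *: (delta_mx i i + delta_mx i l - delta_mx l i - delta_mx l l).
Proof.
move=> il; rewrite !(mulmxDl, mulmxDr, mulmxBl, mulmxBr, mul1mx, mulmx1, mulNmx).
rewrite -!scalemxAl -!scalemxAr !mul_delta_mx (mul_delta_mx_0 _ _ _ il).
rewrite -!scalemxAl !mul_delta_mx.
by apply/matrixP => u w; rewrite !mxE; ring.
Qed.

Lemma mxtrace_delta (i : 'I_n) : \tr (delta_mx i i : 'M[R]_n) = 1.
Proof.
rewrite /mxtrace (bigD1 i) //= big1 => [|k ki]; first by rewrite mxE !eqxx addr0.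
by rewrite mxE (negbTE ki).
Qed.

End ElementaryMatrices.

Section Congruence.
Variables (R : comPzRingType) (p : nat).
Local Notation in_pmR := (@in_pmR R p).

Lemma in_pmR0 m : in_pmR m 0.
Proof. by exists 0; rewrite mulr0. Qed.

Lemma in_pmRD m x y : in_pmR m x -> in_pmR m y -> in_pmR m (x + y).
Proof. by case=> x' -> [y' ->]; exists (x' + y'); rewrite mulrDr. Qed.

Lemma in_pmRN m x : in_pmR m x -> in_pmR m (- x).
Proof. by case=> x' ->; exists (- x'); rewrite mulrN. Qed.

Lemma in_pmRMr m x y : in_pmR m x -> in_pmR m (x * y).
Proof. by case=> x' ->; exists (x' * y); rewrite mulrA. Qed.

Lemma in_pmRMl m x y : in_pmR m y -> in_pmR m (x * y).
Proof. by rewrite mulrC; apply: in_pmRMr. Qed.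

Lemma in_pmRM m1 m2 x y :
  in_pmR m1 x -> in_pmR m2 y -> in_pmR (m1 + m2) (x * y).
Proof.
by case=> x' -> [y' ->]; exists (x' * y'); rewrite expnD natrM mulrACA.
Qed.

Lemma in_pmR_le m1 m2 x : (m2 <= m1)%N -> in_pmR m1 x -> in_pmR m2 x.
Proof.
move=> le_m21 [x' ->]; exists ((p ^ (m1 - m2))%N%:R * x').
by rewrite mulrA -natrM -expnD subnKC.
Qed.

Lemma in_pmR_exp m : in_pmR m (p ^ m)%N%:R.
Proof. by exists 1; rewrite mulr1. Qed.

Lemma in_pmR_sum m (T : Type) (r : seq T) (P : pred T) (F : T -> R) :
  (forall i, P i -> in_pmR m (F i)) -> in_pmR m (\sum_(i <- r | P i) F i).
Proof. by move=> hF; apply: big_ind => //; [apply: in_pmR0 | apply: in_pmRD]. Qed.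

Lemma in_pmR_prodD m (T : Type) (r : seq T) (a d : T -> R) :
  (forall i, in_pmR m (d i)) ->
  in_pmR m (\prod_(i <- r) (a i + d i) - \prod_(i <- r) a i).
Proof.
move=> hd; elim: r => [|x r IHr]; first by rewrite !big_nil subrr; apply: in_pmR0.
rewrite !big_cons.
have -> : (a x + d x) * \prod_(j <- r) (a j + d j) - a x * \prod_(j <- r) a j =
    a x * (\prod_(j <- r) (a j + d j) - \prod_(j <- r) a j) +
    d x * \prod_(j <- r) (a j + d j) by ring.
by apply: in_pmRD; [apply: in_pmRMl | apply: in_pmRMr].
Qed.

Lemma in_pmR_detD m n (M N : 'M[R]_n) : (forall i j, in_pmR m (N i j)) ->
  in_pmR m (\det (M + N) - \det M).
Proof.
move=> hN; rewrite /determinant -sumrB; apply: in_pmR_sum => sg _.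
rewrite -mulrBr; apply: in_pmRMl.
under eq_bigr do rewrite mxE.
exact: in_pmR_prodD.
Qed.

(* Compare [det A] with [det (1 + (A - 1)_ll e_ll) = 1 + (A - 1)_ll]. *)
Lemma in_pmR_det1_corner m n (A : 'M[R]_n) (l : 'I_n) : \det A = 1 ->
  (forall i k, (i, k) != (l, l) -> in_pmR m ((A - 1%:M) i k)) ->
  in_pmR m ((A - 1%:M) l l).
Proof.
move=> detA1 hA; set a := (A - 1%:M) l l.
set M := 1%:M + a *: delta_mx l l.
have hAM i k : in_pmR m ((A - M) i k).
  have -> : (A - M) i k = (A - 1%:M) i k - a * ((i == l) && (k == l))%:R.
    by rewrite !mxE; ring.
  have [[-> ->]|ikl] := eqVneq (i, k) (l, l).
    by rewrite eqxx mulr1 subrr; apply: in_pmR0.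
  have /negbTE-> : ~~ ((i == l) && (k == l)).
    by apply: contra ikl => /andP[/eqP-> /eqP->].
  by rewrite mulr0 subr0; apply: hA.
have := @in_pmR_detD m n M (A - M) hAM; rewrite [M + _]addrC subrK detA1 det_dilation.
by move/in_pmRN; rewrite opprB addrC addKr.
Qed.

End Congruence.

Section ZBasis.
Variables (R : comPzRingType) (I : eqType) (b : I -> R).

Definition zcomb (e : seq I) (c : I -> int) : R := \sum_(i <- e) b i *~ c i.

Definition zcoef (e : seq I) (c : I -> int) (v : I) : int :=
  \sum_(i <- e | i == v) c i.

Lemma big_pred1_uniq (V : nmodType) (e : seq I) (F : I -> V) v : uniq e ->
  \sum_(i <- e | i == v) F i = if v \in e then F v else 0.
Proof.
elim: e => [|x e IHe] /=; first by rewrite big_nil.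
case/andP=> xe ue; rewrite big_cons IHe // in_cons eq_sym.
by case: eqP => [->|_]; rewrite ?(negbTE xe) ?addr0.
Qed.

Lemma zcoef_notin e c v : v \notin e -> zcoef e c v = 0.
Proof.
move=> ve; rewrite /zcoef big_seq_cond big1 // => i /andP[ie /eqP iv].
by move: ve; rewrite -iv ie.
Qed.

Lemma zcomb_zcoef e c E : uniq E -> {subset e <= E} ->
  zcomb e c = zcomb E (zcoef e c).
Proof.
move=> uE sE; rewrite /zcomb /zcoef.
under [RHS]eq_bigr do rewrite mulrz_sumr.
rewrite (exchange_big_dep predT) //=; apply: eq_big_seq => i ie.
by rewrite (eq_bigl (pred1 i)) ?big_pred1_uniq ?sE // => j; rewrite eq_sym.
Qed.

Hypothesis hb : is_Zbasis b.

Lemma zcoef_inj e c e' c' : zcomb e c = zcomb e' c' -> zcoef e c =1 zcoef e' c'.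
Proof.
set E := undup (e ++ e'); have uE : uniq E by rewrite undup_uniq.
have sE : {subset e <= E} by move=> i ie; rewrite mem_undup mem_cat ie.
have sE' : {subset e' <= E} by move=> i ie; rewrite mem_undup mem_cat ie orbT.
rewrite (zcomb_zcoef c uE sE) (zcomb_zcoef c' uE sE') => eq_comb v.
have /(hb.2 _ _ uE) E0 : zcomb E (fun w => zcoef e c w - zcoef e' c' w) = 0.
  rewrite -[RHS](subrr (zcomb E (zcoef e c))) [X in _ - X]eq_comb /zcomb -sumrB.
  by apply: eq_bigr => i _; rewrite mulrzBr.
have [vE|vE] := boolP (v \in E); first by apply/eqP; rewrite -subr_eq0 E0.
by rewrite !zcoef_notin //; [exact: contra (sE' v) vE | exact: contra (sE v) vE].
Qed.

Definition zrep (x : R) : seq I * (I -> int) :=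
  epsilon (inhabits ([::], fun=> 0)) (fun ec => x = zcomb ec.1 ec.2).

Definition coord (x : R) (v : I) : int := zcoef (zrep x).1 (zrep x).2 v.

Lemma zrepP x : x = zcomb (zrep x).1 (zrep x).2.
Proof.
apply: (epsilon_spec _ (fun ec => x = zcomb ec.1 ec.2)).
by have [e [c ->]] := hb.1 x; exists (e, c).
Qed.

Lemma coord_zcomb e c v : coord (zcomb e c) v = zcoef e c v.
Proof. exact/zcoef_inj/esym/zrepP. Qed.

Lemma coord_supp x v : coord x v != 0 -> v \in (zrep x).1.
Proof. by apply: contraR => v_notin; rewrite /coord zcoef_notin. Qed.

Lemma zcomb_coord x E : uniq E -> {subset (zrep x).1 <= E} ->
  x = zcomb E (coord x).
Proof. by move=> uE sE; rewrite {1}[x]zrepP (zcomb_zcoef _ uE sE). Qed.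

Lemma zcomb_coord_undup x : x = zcomb (undup (zrep x).1) (coord x).
Proof. by apply: zcomb_coord; rewrite ?undup_uniq // => i; rewrite mem_undup. Qed.

Lemma coordD x y v : coord (x + y) v = coord x v + coord y v.
Proof.
set E := undup ((zrep x).1 ++ (zrep y).1); have uE : uniq E by apply: undup_uniq.
have sx : {subset (zrep x).1 <= E} by move=> i ix; rewrite mem_undup mem_cat ix.
have sy : {subset (zrep y).1 <= E} by move=> i iy; rewrite mem_undup mem_cat iy orbT.
have -> : x + y = zcomb E (fun w => coord x w + coord y w).
  rewrite {1}(zcomb_coord uE sx) {1}(zcomb_coord uE sy) /zcomb -big_split.
  by apply: eq_bigr => i _; rewrite mulrzDr.
rewrite coord_zcomb /zcoef big_pred1_uniq //; case: ifPn => // vE.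
have coord0_notin z : {subset (zrep z).1 <= E} -> coord z v = 0.
  by move=> sz; apply: contraNeq vE => /coord_supp/sz.
by rewrite !coord0_notin.
Qed.

Lemma coord0 v : coord 0 v = 0.
Proof. by apply: (addrI (coord 0 v)); rewrite -coordD !addr0. Qed.

Lemma coordMn x k v : coord (x *+ k) v = coord x v *+ k.
Proof. by elim: k => [|k IHk]; rewrite ?coord0 // !mulrS coordD IHk. Qed.

Lemma coord_eq0 x : (forall v, coord x v = 0) -> x = 0.
Proof.
by move=> x0; rewrite [x]zcomb_coord_undup /zcomb big1 // => i _; rewrite x0 mulr0z.
Qed.

Lemma mulr_natl_inj k (x y : R) : (0 < k)%N -> k%:R * x = k%:R * y -> x = y.
Proof.
move=> k_gt0 /eqP; rewrite -subr_eq0 -mulrBr mulr_natl => /eqP xy0.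
apply/eqP; rewrite -subr_eq0; apply/eqP/coord_eq0 => v.
have /eqP := coordMn (x - y) k v; rewrite xy0 coord0 eq_sym mulrn_eq0.
by rewrite eqn0Ngt k_gt0 => /eqP.
Qed.

Lemma dvdz_coordP q x :
  (exists y, x = q%:R * y) <-> (forall v, (q %| coord x v)%Z).
Proof.
split=> [[y ->] v|q_dvd].
  by rewrite mulr_natl coordMn -mulr_natr natz dvdz_mull ?dvdzz.
exists (zcomb (undup (zrep x).1) (fun v => (coord x v %/ q)%Z)).
rewrite {1}[x]zcomb_coord_undup /zcomb mulr_sumr; apply: eq_bigr => i _.
by rewrite -{1}(divzK (q_dvd i)) mulrzA -pmulrn mulr_natl.
Qed.

Lemma in_pmR_mulKn p r m (y : R) : (0 < p)%N ->
  in_pmR p (r + m) ((p ^ r)%N%:R * y) -> in_pmR p m y.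
Proof.
move=> p_gt0 [z]; rewrite expnD natrM -mulrA => /mulr_natl_inj -> //.
  by exists z.
by rewrite expn_gt0 p_gt0.
Qed.

(* Meaningful only when [k] divides [x]. *)
Definition natdivr (k : nat) (x : R) : R :=
  epsilon (inhabits 0) (fun y => x = k%:R * y).

Lemma natdivrK k y : (0 < k)%N -> natdivr k (k%:R * y) = y.
Proof.
move=> k_gt0; apply: (mulr_natl_inj k_gt0); apply/esym.
exact: (epsilon_spec _ (fun z => k%:R * y = k%:R * z) (ex_intro _ y erefl)).
Qed.

Definition coord_mod (q : nat) (x : R) (v : I) : 'Z_q := (coord x v)%:~R.

Lemma coord_modD q x y v : coord_mod q (x + y) v = coord_mod q x v + coord_mod q y v.
Proof. by rewrite /coord_mod coordD intrD. Qed.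

Lemma coord_mod_eq0 q x : (1 < q)%N ->
  (forall v, coord_mod q x v = 0) <-> exists y, x = q%:R * y.
Proof.
move=> q_gt1; rewrite dvdz_coordP.
split=> h v; last by apply/eqP; rewrite intr_Zp_eq0.
by rewrite -intr_Zp_eq0 //; apply/eqP; apply: h.
Qed.

Lemma coord_mod_supp q x v : coord_mod q x v != 0 -> v \in (zrep x).1.
Proof.
by move=> h; apply: coord_supp; apply: contraNneq h; rewrite /coord_mod => ->.
Qed.

Lemma coord_mod_zcomb q e (g : I -> 'Z_q) v : (forall w, g w != 0 -> w \in e) ->
  coord_mod q (zcomb (undup e) (fun w => (g w : nat)%:Z)) v = g v.
Proof.
move=> g_supp; rewrite /coord_mod coord_zcomb /zcoef big_pred1_uniq ?undup_uniq //.
rewrite mem_undup; case: ifPn => [_|ve]; first by rewrite -pmulrn natr_Zp.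
by apply/esym/eqP; apply: contraNT ve => /g_supp.
Qed.

Section CongruenceSubgroup.
Variables (p r s n' : nat).
Hypotheses (p_gt1 : (1 < p)%N) (s_gt0 : (0 < s)%N) (s_le_r : (s <= r)%N).
Local Notation n := n'.+1.
Local Notation pr := (p ^ r)%N%:R.
Local Notation q := (p ^ s)%N.

Lemma p_gt0 : (0 < p)%N. Proof. exact: ltnW. Qed.

Lemma pr_gt0 : (0 < p ^ r)%N. Proof. by rewrite expn_gt0 p_gt0. Qed.

Lemma q_gt1 : (1 < q)%N.
Proof. by rewrite -(expn0 p) ltn_exp2l. Qed.

Definition dev (A : 'M[R]_n) i k : R := natdivr (p ^ r) ((A - 1%:M) i k).

Lemma Gamma_dev A : in_Gamma p r A -> forall i k, (A - 1%:M) i k = pr * dev A i k.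
Proof.
by case=> _ hA i k; rewrite /dev; have [y ->] := hA i k; rewrite natdivrK ?pr_gt0.
Qed.

Lemma in_pmR_dev A m i k : in_pmR p (r + m) ((A - 1%:M) i k) -> in_pmR p m (dev A i k).
Proof.
move=> [y Ay]; rewrite /dev Ay expnD natrM -mulrA natdivrK ?pr_gt0 //.
by exists y.
Qed.

Lemma mulmx_sub1_cong (A B : 'M[R]_n) : in_Gamma p r A -> in_Gamma p r B ->
  forall i k, in_pmR p (r + r)
    ((A *m B - 1%:M) i k - ((A - 1%:M) i k + (B - 1%:M) i k)).
Proof.
case=> _ hA [_ hB] i k; rewrite mulmx_sub1.
move: (A - 1%:M) (B - 1%:M) hA hB => A1 B1 hA hB.
have -> : (A1 + B1 + A1 *m B1) i k - (A1 i k + B1 i k) = \sum_j A1 i j * B1 j k.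
  by rewrite !mxE; ring.
by apply: in_pmR_sum => j _; apply: in_pmRM.
Qed.

Lemma GammaM (A B : 'M[R]_n) :
  in_Gamma p r A -> in_Gamma p r B -> in_Gamma p r (A *m B).
Proof.
move=> hA hB; have [detA hA1] := hA; have [detB hB1] := hB.
split=> [|i k]; first by rewrite mulmxE detM detA detB mulr1.
rewrite -(subrK ((A - 1%:M) i k + (B - 1%:M) i k) ((A *m B - 1%:M) i k)).
apply: in_pmRD; last exact: in_pmRD.
by apply: in_pmR_le (mulmx_sub1_cong hA hB i k); apply: leq_addr.
Qed.

Lemma devM (A B : 'M[R]_n) : in_Gamma p r A -> in_Gamma p r B -> forall i k,
  dev (A *m B) i k = dev A i k + dev B i k + pr * \sum_j dev A i j * dev B j k.
Proof.
move=> hA hB i k; apply: (mulr_natl_inj pr_gt0).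
rewrite -Gamma_dev ?mulmx_sub1; last exact: GammaM.
move: (Gamma_dev hA) (Gamma_dev hB); move: (A - 1%:M) (B - 1%:M) => A1 B1 eA eB.
rewrite !mxE eA eB (eq_bigr (fun j => pr * dev A i j * (pr * dev B j k))).
  by rewrite !mulrDr !mulr_sumr; congr (_ + _); apply: eq_bigr => j _; ring.
by move=> j _; rewrite eA eB.
Qed.

Definition liftable (X : 'M[R]_n) := exists2 A, in_Gamma p r A &
  forall i k, in_pmR p (r + s) ((A - 1%:M) i k - pr * X i k).

Lemma liftable0 : liftable 0.
Proof.
exists 1%:M; first by split=> [|i k]; rewrite ?det1 // subrr mxE; apply: in_pmR0.
by move=> i k; rewrite subrr !mxE mulr0 subrr; apply: in_pmR0.
Qed.

Lemma liftableD X Y : liftable X -> liftable Y -> liftable (X + Y).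
Proof.
move=> [A hA eA] [B hB eB]; exists (A *m B) => [|i k]; first exact: GammaM.
have -> : (A *m B - 1%:M) i k - pr * (X + Y) i k =
    ((A *m B - 1%:M) i k - ((A - 1%:M) i k + (B - 1%:M) i k)) +
    ((A - 1%:M) i k - pr * X i k) + ((B - 1%:M) i k - pr * Y i k).
  by rewrite [(X + Y) i k]mxE; ring.
apply: in_pmRD; last exact: eB.
apply: in_pmRD; last exact: eA.
by apply: in_pmR_le (mulmx_sub1_cong hA hB i k); rewrite leq_add2l.
Qed.

Lemma liftable_sum (T : Type) (t : seq T) (P : pred T) (F : T -> 'M[R]_n) :
  (forall i, P i -> liftable (F i)) -> liftable (\sum_(i <- t | P i) F i).
Proof. by move=> hF; apply: big_ind => //; [apply: liftable0 | apply: liftableD]. Qed.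

Lemma liftable_det1 x (M : 'M[R]_n) : \det (1%:M + (pr * x) *: M) = 1 ->
  liftable (x *: M).
Proof.
move=> det1; exists (1%:M + (pr * x) *: M); last first.
  by move=> u w; rewrite [1%:M + _]addrC addrK !mxE -mulrA subrr; apply: in_pmR0.
split=> // u w; rewrite [1%:M + _]addrC addrK !mxE.
by apply/in_pmRMr/in_pmRMr/in_pmR_exp.
Qed.

Lemma liftable_offdiag x (i k : 'I_n) : i != k -> liftable (x *: delta_mx i k).
Proof. by move=> ik; apply/liftable_det1/det_transvection. Qed.

Lemma liftable_diag x (i l : 'I_n) : liftable (x *: (delta_mx i i - delta_mx l l)).
Proof.
have [->|il] := eqVneq i l; first by rewrite subrr scaler0; apply: liftable0.
have li : l != i by rewrite eq_sym.
have -> : x *: (delta_mx i i - delta_mx l l) =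
  x *: (delta_mx i i + delta_mx i l - delta_mx l i - delta_mx l l) +
  (- x) *: delta_mx i l + x *: delta_mx l i :> 'M[R]_n.
  by apply/matrixP => u w; rewrite !mxE; ring.
apply: liftableD; [apply: liftableD | exact: liftable_offdiag].
- apply: liftable_det1; rewrite -(transvection_conj _ il) !mulmxE !detM.
  rewrite -scaleN1r !det_transvection // -[delta_mx l i]scale1r.
  by rewrite det_transvection ?mul1r.
- exact: liftable_offdiag.
Qed.

(* The matrices [x e_ik] (i <> k) and [x (e_ii - e_ll)] span the trace-zero
   matrices. *)
Lemma liftable_trace0 X : \tr X = 0 -> liftable X.
Proof.
move=> trX0; pose l : 'I_n := ord0.
have -> : X = \sum_i (X i i *: (delta_mx i i - delta_mx l l) +
                     \sum_(k | k != i) X i k *: delta_mx i k).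
  rewrite big_split /=; under eq_bigr do rewrite scalerBr.
  rewrite sumrB -scaler_suml -/(\tr X) trX0 scale0r subr0 -big_split /=.
  rewrite [LHS]matrix_sum_delta; apply: eq_bigr => i _.
  by rewrite (bigD1 i).
apply: liftable_sum => i _; apply: liftableD; first exact: liftable_diag.
by apply: liftable_sum => k ki; apply: liftable_offdiag; rewrite eq_sym.
Qed.

Lemma Gamma_dev_offcorner A (l : 'I_n) : in_Gamma p r A ->
  (forall i k, (i, k) != (l, l) -> in_pmR p s (dev A i k)) -> in_Gamma p (r + s) A.
Proof.
move=> hA hdev; have [detA _] := hA.
have off i k : (i, k) != (l, l) -> in_pmR p (r + s) ((A - 1%:M) i k).
  by move=> ikl; rewrite (Gamma_dev hA); apply/in_pmRM/hdev/ikl/in_pmR_exp.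
split=> // i k; have [[-> ->]|] := eqVneq (i, k) (l, l); last exact: off.
exact: in_pmR_det1_corner.
Qed.

Local Notation N := (n ^ 2 - 1)%N.

(* The coordinates of [Gamma_r / Gamma_(r+s)] are the entries of [dev A] at
   all positions except the last diagonal one, which the determinant fixes. *)
Definition entry (j : 'I_N) : 'I_n * 'I_n := (inord (j %/ n), inord (j %% n)).

Lemma entry_val (j : 'I_N) :
  ((entry j).1 : nat) = (j %/ n)%N /\ ((entry j).2 : nat) = (j %% n)%N.
Proof.
by rewrite !inordK ?ltn_pmod // ltn_divLR //; have := ltn_ord j; lia.
Qed.

Lemma entry_inj : injective entry.
Proof.
move=> j j' e; have [a c] := entry_val j; have [a' c'] := entry_val j'.
by apply: val_inj; rewrite /= (divn_eq j n) (divn_eq j' n) -a -c -a' -c' e.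
Qed.

Lemma entry_neq_max j : entry j != (ord_max, ord_max).
Proof.
apply/eqP => e; have [a c] := entry_val j; rewrite e /= in a c.
by have := ltn_ord j; rewrite (divn_eq j n) -a -c; nia.
Qed.

Lemma entry_onto (a c : 'I_n) : (a, c) != (ord_max, ord_max) ->
  exists j, entry j = (a, c).
Proof.
move=> ac_max; have ac_lt : (a * n + c < N)%N.
  move: ac_max (ltn_ord a) (ltn_ord c); rewrite xpair_eqE -!val_eqE /=.
  by case/nandP => /eqP ne lt_a lt_c; nia.
exists (Ordinal ac_lt).
by rewrite /entry /= divnMDl // divn_small // addn0 modnMDl modn_small // !inord_val.
Qed.

Lemma entry_matrix (x : 'I_N -> R) :
  {Y : 'M[R]_n | forall j, Y (entry j).1 (entry j).2 = x j}.
Proof.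
exists (\matrix_(a, c) \sum_(j | entry j == (a, c)) x j) => j.
rewrite mxE -surjective_pairing (eq_bigl (pred1 j)) ?big_pred1_eq // => j'.
by rewrite /= (inj_eq entry_inj).
Qed.

Definition Gamma_coord (A : 'M[R]_n) (j : 'I_N) : I -> 'Z_q :=
  coord_mod q (dev A (entry j).1 (entry j).2).

Lemma Gamma_coord_fin_supp A : fin_supp (Gamma_coord A).
Proof.
exists (flatten [seq (zrep (dev A (entry j).1 (entry j).2)).1 | j <- enum 'I_N]).
move=> j v /coord_mod_supp v_in; apply/flatten_mapP; exists j => //.
by rewrite mem_enum.
Qed.

Lemma Gamma_coordM A B : in_Gamma p r A -> in_Gamma p r B ->
  forall j v, Gamma_coord (A *m B) j v = Gamma_coord A j v + Gamma_coord B j v.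
Proof.
move=> hA hB j v; rewrite /Gamma_coord devM // !coord_modD.
set z := pr * _; have /(coord_mod_eq0 _ q_gt1) -> : in_pmR p s z.
  by apply: in_pmR_le s_le_r _; apply/in_pmRMr/in_pmR_exp.
by rewrite addr0.
Qed.

Lemma Gamma_coord_ker A : in_Gamma p r A ->
  (forall j v, Gamma_coord A j v = 0) <-> in_Gamma p (r + s) A.
Proof.
move=> hA; split=> [coordA0|[_ hAs] j].
  apply: (Gamma_dev_offcorner (l := ord_max) hA) => i k /entry_onto [j ej].
  by apply/(coord_mod_eq0 _ q_gt1); have := coordA0 j; rewrite /Gamma_coord ej.
exact/(coord_mod_eq0 _ q_gt1)/in_pmR_dev.
Qed.

Lemma Gamma_coord_onto f : fin_supp f ->
  exists2 A, in_Gamma p r A & forall j v, Gamma_coord A j v = f j v.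
Proof.
case=> e f_supp; pose x j := zcomb (undup e) (fun w => (f j w : nat)%:Z).
have [Y YE] := entry_matrix x.
pose l : 'I_n := ord_max.
have trY0 : \tr (Y - \tr Y *: delta_mx l l) = 0.
  by rewrite linearB /= mxtraceZ mxtrace_delta mulr1 subrr.
have [A hA hAY] := liftable_trace0 trY0.
exists A => // j v.
have : in_pmR p (r + s) (pr * (dev A (entry j).1 (entry j).2 - x j)).
  move: (hAY (entry j).1 (entry j).2); rewrite (Gamma_dev hA) mulrBr !mxE YE.
  have := entry_neq_max j; rewrite [entry j]surjective_pairing xpair_eqE.
  by move=> /negbTE ->; rewrite mulr0 subr0.
move=> /(in_pmR_mulKn p_gt0) /(coord_mod_eq0 _ q_gt1) dev_x.
rewrite /Gamma_coord -[dev A _ _](subrK (x j)) coord_modD dev_x add0r.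
exact: coord_mod_zcomb (f_supp j).
Qed.

End CongruenceSubgroup.
End ZBasis.

Theorem theorem3p5 (R : comPzRingType) (I : eqType) (b : I -> R)
    (n p r s : nat) :
  is_Zbasis b -> (2 <= n)%N -> prime p ->
  ((exists e : seq I, forall v : I, v \in e) \/ s = 1%N) ->
  (1 <= s)%N -> (s <= r)%N ->
  exists phi : 'M[R]_n -> 'I_(n ^ 2 - 1) -> I -> 'Z_(p ^ s),
    [/\ forall A, in_Gamma p r A -> fin_supp (phi A),
        forall A B, in_Gamma p r A -> in_Gamma p r B ->
          forall j v, phi (A *m B) j v = phi A j v + phi B j v,
        forall f, fin_supp f ->
          exists2 A, in_Gamma p r A & forall j v, phi A j v = f j v
      & forall A, in_Gamma p r A ->
          ((forall j v, phi A j v = 0) <-> in_Gamma p (r + s) A)].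
Proof.
move=> hb n_ge2 p_prime _ s_gt0 s_le_r; have p_gt1 := prime_gt1 p_prime.
case: n n_ge2 => // n' _.
exists (@Gamma_coord R I b p r s n'); split.
- by move=> A _; apply: Gamma_coord_fin_supp.
- by move=> A B; apply: (Gamma_coordM hb p_gt1 s_gt0 s_le_r).
- by move=> f; apply: (Gamma_coord_onto hb p_gt1 s_gt0 s_le_r).
- by move=> A; apply: (Gamma_coord_ker hb p_gt1 s_gt0 s_le_r).
Qed.
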